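(* Let $G=(V,E)$ be a finite simple graph with $V=\{x_1,\dots,x_r\}$, $E=\{e_1,\dots,e_n\}$, and suppose $(x_1,x_2,x_3,x_4)$ is a path of $G$ with edges $e_1=\{x_1,x_2\}$, $e_2=\{x_2,x_3\}$, $e_3=\{x_3,x_4\}$. Let $s=w_1x_1+w_2x_2+w_3x_3+\cdots+w_rx_r\in\operatorname{Im}(\varphi_G)$ be such that $\Delta^G_s$ is not acyclic. Then $w_2=w_3$.
   Context: $\mathbb{N}[V]$ and $\mathbb{N}[E]$ denote the free commutative monoids on $V$ and on $E$, and $\varphi_G:\mathbb{N}[E]\to\mathbb{N}[V]$ is the monoid homomorphism with $\varphi_G(e_j)=x_{j_1}+x_{j_2}$ for $e_j=\{x_{j_1},x_{j_2}\}$. For $F\subseteq[n]$ put $e_F=\sum_{i\in F}e_i$, and for $s\in\mathbb{N}[V]$ let $\Delta^G_s=\{F\subseteq[n]: s-\varphi_G(e_F)\in\operatorname{Im}(\varphi_G)\}$ (difference computed in $\mathbb{Z}^V$), a simplicial complex on $[n]$. It is acyclic if all its reduced homology groups with coefficients in $\mathbb{K}$ vanish. A path is a walk $(y_0,\dots,y_m)$ (consecutive vertices adjacent) whose interior vertices $y_1,\dots,y_{m-1}$ have degree exactly $2$ in $G$. *)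

From mathcomp Require Import all_boot all_order all_algebra.
Set Implicit Arguments. Unset Strict Implicit. Unset Printing Implicit Defensive.
Import GRing.Theory.
Local Open Scope ring_scope.

Definition simple_graph (r n : nat) (ends : 'I_n -> {set 'I_r}) : Prop :=
  (forall j, #|ends j| = 2%N) /\ injective ends.

Definition deg (r n : nat) (ends : 'I_n -> {set 'I_r}) (x : 'I_r) : nat :=
  #|[set j | x \in ends j]|.

(* phi_G applied to a (multiplicity) vector a in N[E], evaluated at vertex x *)
Definition phiG (r n : nat) (ends : 'I_n -> {set 'I_r}) (a : 'I_n -> nat)
  (x : 'I_r) : nat := (\sum_(j < n) a j * (x \in ends j))%N.

Definition in_imZ (r n : nat) (ends : 'I_n -> {set 'I_r}) (s : 'I_r -> int) : Prop :=
  exists a : 'I_n -> nat, forall x, s x = (phiG ends a x)%:Z.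

(* Delta^G_s : the faces F of [n] such that s - phi_G(e_F) lies in Im(phi_G) *)
Definition DeltaG (r n : nat) (ends : 'I_n -> {set 'I_r}) (s : 'I_r -> nat)
  (F : {set 'I_n}) : Prop :=
  in_imZ ends (fun x => (s x)%:Z - (#|[set j in F | x \in ends j]|)%:Z).

(* Simplicial chains with coefficients in K on the full simplex on 'I_n:
   a chain is a K-valued function on subsets (faces) of 'I_n. *)
Definition chain (K : fieldType) (n : nat) := {ffun {set 'I_n} -> K}.

(* Augmented simplicial boundary: d[F] = sum_{i in F} (-1)^(pos of i in F) [F \ i],
   with vertices ordered by their index; d[{i}] = [emptyset]. *)
Definition boundary (K : fieldType) (n : nat) (c : chain K n) : chain K n :=
  [ffun G : {set 'I_n} =>
     \sum_(i : 'I_n | i \notin G) (-1) ^+ #|[set j in G | (j < i)%N]| * c (i |: G)].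

(* c is a chain of the complex D supported in faces with k elements
   (i.e. of dimension k-1) *)
Definition supported (K : fieldType) (n : nat) (D : {set 'I_n} -> Prop)
  (k : nat) (c : chain K n) : Prop :=
  forall F, c F != 0 -> D F /\ #|F| = k.

(* All reduced homology groups of D with coefficients in K vanish:
   in every degree, every cycle is a boundary (augmented chain complex,
   including the degree -1 term spanned by the empty face). *)
Definition acyclic (K : fieldType) (n : nat) (D : {set 'I_n} -> Prop) : Prop :=
  forall (k : nat) (c : chain K n),
    supported D k c -> boundary c = 0 ->
    exists d : chain K n, supported D k.+1 d /\ boundary d = c.

From mathcomp Require Import all_boot all_order all_algebra.
From mathcomp Require Import zify ring.
Set Implicit Arguments. Unset Strict Implicit. Unset Printing Implicit Defensive.
Import GRing.Theory.
Local Open Scope ring_scope.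

(* If w2 > w3, take a face F of Delta_s and a solution s - phi(e_F) = phi(a).
   The equations at the degree-2 vertices x2 (edges e1, e2) and x3 (edges e2, e3)
   give a_{e1} >= w2 - w3 > 0, so one copy of e1 can be moved from a into F:
   Delta_s is a cone with apex e1.  A cone is acyclic, since coning with the
   apex is a contracting homotopy of the augmented chain complex.  The case
   w3 > w2 is symmetric, with apex e3. *)

Section Cone.
Variables (K : fieldType) (n : nat).

Definition nsmaller (G : {set 'I_n}) (i : 'I_n) : nat := #|[set j in G | (j < i)%N]|.

Lemma nsmaller_setU1 (G : {set 'I_n}) (x i : 'I_n) :
  x \notin G -> nsmaller (x |: G) i = ((x < i)%N + nsmaller G i)%N.
Proof.
move=> xG; rewrite /nsmaller (cardsD1 x) !inE eqxx /=; congr (_ + _)%N.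
apply: eq_card => j; rewrite !inE; case: eqP => [->|//].
by rewrite (negbTE xG).
Qed.

Lemma sign_nsmaller_swap (G : {set 'I_n}) (i v : 'I_n) :
  i != v -> i \notin G -> v \notin G ->
  (-1) ^+ nsmaller (v |: G) i * (-1) ^+ nsmaller (i |: G) v
    = - ((-1) ^+ nsmaller G v * (-1) ^+ nsmaller G i) :> K.
Proof.
move=> iv iG vG; rewrite !nsmaller_setU1 // !exprD.
have : (i : nat) != v by rewrite (inj_eq val_inj).
by case: ltngtP => // _ _ /=; ring.
Qed.

Definition cone_chain (v : 'I_n) (c : chain K n) : chain K n :=
  [ffun G : {set 'I_n} =>
     if v \in G then (-1) ^+ nsmaller (G :\ v) v * c (G :\ v) else 0].

Lemma boundary_cone_chain (v : 'I_n) (c : chain K n) (G : {set 'I_n}) :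
  boundary (cone_chain v c) G + cone_chain v (boundary c) G = c G.
Proof.
rewrite /boundary !ffunE.
have [vG|vG] := boolP (v \in G); last first.
  rewrite addr0 (bigD1 v) //= big1 ?addr0.
    by rewrite /cone_chain ffunE setU11 setU1K // signrMK.
  move=> i /andP [iG iv].
  by rewrite /cone_chain ffunE !inE (negbTE vG) orbF eq_sym (negbTE iv) mulr0.
set G' := G :\ v.
have vG' : v \notin G' by rewrite !inE eqxx.
rewrite (bigD1 v vG') /= setD1K // mulrDr signrMK addrCA -[RHS]addr0.
congr (_ + _).
rewrite [X in _ * X](eq_bigl (fun i => i \notin G)); last first.
  by move=> i; rewrite /G' !inE; case: (eqVneq i v) => [->|] /=; rewrite ?vG ?andbT.
rewrite big_distrr /= -big_split /= big1 // => i iG.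
have iv : i != v by apply: contraNneq iG => ->.
have iG' : i \notin G' by rewrite !inE negb_and iG orbT.
rewrite /cone_chain ffunE in_setU1 vG orbT -/(nsmaller G i).
have -> : (i |: G) :\ v = i |: G'.
  apply/setP => j; rewrite !inE; case: (eqVneq j v) => [->|//].
  by rewrite eq_sym (negbTE iv).
rewrite -/(nsmaller G' i) -[G in nsmaller G i](setD1K vG) -/G' !mulrA.
by rewrite sign_nsmaller_swap // mulNr addNr.
Qed.

Lemma cone_acyclic (D : {set 'I_n} -> Prop) (v : 'I_n) :
  (forall F, D F -> D (v |: F)) -> acyclic K D.
Proof.
move=> Dcone k c c_supp c_cycle; exists (cone_chain v c); split.
- move=> G; rewrite /cone_chain ffunE; case: ifP => [vG|_]; last by rewrite eqxx.
  move=> cone_nz.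
  have c_nz : c (G :\ v) != 0 by apply: contraNneq cone_nz => ->; rewrite mulr0.
  have [DG cardG] := c_supp _ c_nz.
  split; first by rewrite -(setD1K vG); apply: Dcone.
  by rewrite (cardsD1 v) vG cardG.
- apply/ffunP => G; have := boundary_cone_chain v c G.
  by rewrite c_cycle /cone_chain !ffunE mulr0 if_same addr0.
Qed.

End Cone.

Section DeltaCone.
Variables (r n : nat) (ends : 'I_n -> {set 'I_r}).

Lemma eq_phiG (a b : 'I_n -> nat) (x : 'I_r) : a =1 b -> phiG ends a x = phiG ends b x.
Proof. by move=> ab; apply: eq_bigr => j _; rewrite ab. Qed.

Lemma phiG_add (a b : 'I_n -> nat) (x : 'I_r) :
  phiG ends (fun j => a j + b j)%N x = (phiG ends a x + phiG ends b x)%N.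
Proof. by rewrite /phiG -big_split; apply: eq_bigr => j _; rewrite mulnDl. Qed.

Lemma phiG_delta (p : 'I_n) (x : 'I_r) :
  phiG ends (fun j => nat_of_bool (j == p)) x = (x \in ends p) :> nat.
Proof.
rewrite /phiG (bigD1 p) //= eqxx mul1n big1 ?addn0 // => j /negbTE ->.
by rewrite mul0n.
Qed.

Lemma card_incident_phiG (F : {set 'I_n}) (x : 'I_r) :
  #|[set j in F | x \in ends j]| = phiG ends (fun j => nat_of_bool (j \in F)) x.
Proof.
rewrite -sum1_card /phiG big_mkcond /=; apply: eq_bigr => j _.
by rewrite !inE; case: (j \in F); case: (x \in ends j).
Qed.

Lemma phiG_deg2 (a : 'I_n -> nat) (x : 'I_r) (p q : 'I_n) :
  p != q -> [set j | x \in ends j] = [set p; q] -> phiG ends a x = (a p + a q)%N.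
Proof.
move=> pq Ex.
have incE j : (x \in ends j) = (j \in [set p; q]) by rewrite -Ex inE.
rewrite /phiG (bigD1 p) //= (bigD1 q) /=; last by rewrite eq_sym.
rewrite big1 ?addn0 ?incE ?in_set2 ?eqxx ?orbT ?muln1 // => j /andP [jp jq].
by rewrite incE in_set2 (negbTE jp) (negbTE jq) muln0.
Qed.

Lemma incident_deg2 (x : 'I_r) (p q : 'I_n) :
  deg ends x = 2%N -> p != q -> x \in ends p -> x \in ends q ->
  [set j | x \in ends j] = [set p; q].
Proof.
move=> degx pq xp xq; apply/esym/eqP.
rewrite eqEcard cards2 pq -[#|_|]/(deg ends x) degx andbT.
by apply/subsetP => j; rewrite !inE => /orP [] /eqP ->.
Qed.

Variable w : 'I_r -> nat.

Lemma DeltaG_setU1 (F : {set 'I_n}) (p : 'I_n) (a : 'I_n -> nat) :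
  (forall x, (w x)%:Z - #|[set j in F | x \in ends j]|%:Z = (phiG ends a x)%:Z) ->
  p \notin F -> (0 < a p)%N -> DeltaG ends w (p |: F).
Proof.
move=> Fa pF ap.
pose a' j := (a j - (j == p))%N; exists a' => x.
have indE : (fun j : 'I_n => nat_of_bool (j \in p |: F))
             =1 (fun j => (j == p) + (j \in F))%N.
  by move=> j; rewrite in_setU1; case: eqP => [->|]; rewrite ?(negbTE pF).
have aE : a =1 (fun j => a' j + (j == p))%N.
  by move=> j; rewrite /a'; case: eqP => [->|]; rewrite ?subn0 ?addn0 ?subnK.
have := Fa x.
by rewrite !card_incident_phiG (eq_phiG _ indE) (eq_phiG _ aE) !phiG_add phiG_delta; lia.
Qed.

Lemma DeltaG_cone_deg2 (y z : 'I_r) (p q t : 'I_n) :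
  p != q -> q != t ->
  [set j | y \in ends j] = [set p; q] -> [set j | z \in ends j] = [set q; t] ->
  (w z < w y)%N -> forall F, DeltaG ends w F -> DeltaG ends w (p |: F).
Proof.
move=> pq qt Ey Ez wzy F [a Fa].
have [pF|pF] := boolP (p \in F).
  by rewrite (setUidPr _) ?sub1set //; exists a.
apply: (DeltaG_setU1 Fa pF).
have := Fa y; have := Fa z.
rewrite !card_incident_phiG !(phiG_deg2 _ pq Ey) !(phiG_deg2 _ qt Ez) (negbTE pF).
move: (nat_of_bool (q \in F)) (nat_of_bool (t \in F)); lia.
Qed.

End DeltaCone.

Theorem lemma3p7 (K : fieldType) (r n : nat) (ends : 'I_n -> {set 'I_r})
  (x1 x2 x3 x4 : 'I_r) (e1 e2 e3 : 'I_n) (w : 'I_r -> nat) :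
  simple_graph ends ->
  uniq [:: x1; x2; x3; x4] ->
  ends e1 = [set x1; x2] -> ends e2 = [set x2; x3] -> ends e3 = [set x3; x4] ->
  deg ends x2 = 2%N -> deg ends x3 = 2%N ->
  in_imZ ends (fun x => (w x)%:Z) ->
  ~ acyclic K (DeltaG ends w) ->
  w x2 = w x3.
Proof.
move=> _ path_uniq E1 E2 E3 deg2 deg3 _ not_acyclic.
move: path_uniq; rewrite /= !inE !negb_or.
move=> /and4P [/and3P [n12 n13 _] /andP [n23 n24] _ _].
have e12 : e1 != e2.
  by apply: contraTneq (set21 x1 x2) => e12; rewrite -E1 e12 E2 !inE negb_or n12 n13.
have e23 : e2 != e3.
  by apply: contraTneq (set21 x2 x3) => e23; rewrite -E2 e23 E3 !inE negb_or n23 n24.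
have inc2 : [set j | x2 \in ends j] = [set e1; e2].
  by apply: incident_deg2; rewrite ?E1 ?E2 ?set21 ?set22.
have inc3 : [set j | x3 \in ends j] = [set e2; e3].
  by apply: incident_deg2; rewrite ?E2 ?E3 ?set21 ?set22.
case: (ltngtP (w x2) (w x3)) => // w23; case: not_acyclic.
- apply: (cone_acyclic (v := e3)); rewrite setUC in inc2; rewrite setUC in inc3.
  by apply: (DeltaG_cone_deg2 _ _ inc3 inc2 w23); rewrite eq_sym.
- exact: (cone_acyclic (v := e1)) (DeltaG_cone_deg2 e12 e23 inc2 inc3 w23).
Qed.
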